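(* Let $\tilde\partial\in\mathcal D_{A,B,C}$ be a quasi-elementary differential, with associated sets $P,Q,R,X,Y,Z$, set $H$ and injection $h_+:H\to X$. Suppose $a\in A\setminus B$, $b\in B$, $b\prec a$ satisfy at least one of: (1) $(b,a)$ is a $C$-pair; (2) $b\in H$ and $a=h_+(b)$; (3) $a\in Y$, $b\in Q$, and $(\tilde\partial(b),\tilde\partial_{A\setminus B}(a))$ is a $C$-pair; (4) $a\in Z$, $b\in R$, and the elements $q\in Q$, $y\in Y$ with $\tilde\partial(q)=b$, $\tilde\partial_{A\setminus B}(y)=a$ form a $C$-pair $(q,y)$. Then $\langle\tilde\partial(a),b\rangle\ne0$.
   Context: $\mathbb E$ a field; $A=\{a_1\prec\dots\prec a_N\}$ a finite linearly ordered graded set; $\mathbb E(A)$ the graded vector space with basis $A$; $\langle a_i,a_j\rangle=\delta_{ij}$. An $M$-differential: degree $-1$, $\partial^2=0$, $\partial(a_i)\in\mathrm{span}\{a_1,\dots,a_{i-1}\}$. For $B\subset A$ with $\partial\mathbb E(B)\subset\mathbb E(B)$ it is an $M_{A,B}$-differential; $\partial_B$ = restriction, $\partial_{A\setminus B}$ = induced differential on $\mathbb E(A)/\mathbb E(B)\cong\mathbb E(A\setminus B)$. An element $a_k\in B$ is $\partial$-trivial if $k<N$, $a_{k+1}\in A\setminus B$ and $\langle\partial(a_{k+1}),a_k\rangle\neq0$. For $C\subset B$, $\mathcal D_{A,B,C}$ is the set of $M_{A,B}$-differentials for which all elements of $C$ are $\partial$-trivial. For $c\in C$, $c_+$ denotes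 the successor of $c$ in $A$ (it lies in $A\setminus B$); $(c,c_+)$ is called a $C$-pair. Elementary: each basis element maps to $0$ or a single basis element, no two to the same. For $\partial$ with $\partial_B,\partial_{A\setminus B}$ elementary: $Q=\{b\in B:\partial_Bb\ne0\}$, $R=\partial_B(Q)$, $P=B\setminus(Q\cup R)$, $Y=\{a\in A\setminus B:\partial_{A\setminus B}a\ne0\}$, $Z=\partial_{A\setminus B}(Y)$, $X$ the rest. Quasi-elementary: $\partial_B,\partial_{A\setminus B}$ elementary, each $\partial(x)$ ($x\in X$) has a nonzero coefficient on at most one element of $P$, that coefficient being $1$, and each element of $P$ has nonzero coefficient in at most one $\partial(x)$, $x\in X$. $H$ is the set of $\partial$-boundary homologically essential elements (for a quasi-elementary differential, equivalently the set of $p\in P$ appearing in some $\partial(x)$, $x\in X$), and $h_+(b)$ for $b\in H$ is the unique $x\in X$ with $\langle\partial(x),b\rangle\ne0$. *)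

From HB Require Import structures.
From mathcomp Require Import all_boot all_order all_algebra.
Set Implicit Arguments. Unset Strict Implicit. Unset Printing Implicit Defensive.
Import Order.TTheory GRing.Theory Num.Theory.
Local Open Scope ring_scope.

(* Conventions: A = {a_0 < ... < a_{N-1}} is represented by 'I_N ordered by
   the natural order of indices; deg : 'I_N -> int is the grading.
   A differential is encoded by its matrix d : 'M[F]_N with
   d i j = < partial(a_j), a_i >  (coefficient of a_i in partial(a_j)). *)

Section Defs.
Variables (F : fieldType) (N : nat).
Implicit Types (deg : 'I_N -> int) (d : 'M[F]_N) (B C : {set 'I_N}).

Definition is_Mdiff deg d : Prop :=
  [/\ forall i j, d i j != 0 -> deg i = deg j - 1,
      d *m d = 0
    & forall i j, d i j != 0 -> (i < j)%N].

Definition is_MABdiff deg d B : Prop :=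
  is_Mdiff deg d /\ (forall i j, j \in B -> d i j != 0 -> i \in B).

Definition dtrivial d B (k : 'I_N) : Prop :=
  k \in B /\
  exists k' : 'I_N, [/\ val k' = (val k).+1, k' \notin B & d k k' != 0].

Definition in_DABC deg d B C : Prop :=
  [/\ is_MABdiff deg d B, C \subset B & forall c, c \in C -> dtrivial d B c].

Definition Cpair C (c c' : 'I_N) : Prop := c \in C /\ val c' = (val c).+1.

(* partial_B(j) = a_r  (j in B) *)
Definition mapsB d B (j r : 'I_N) : Prop :=
  r \in B /\ forall i, i \in B -> d i j = (i == r)%:R.
(* partial_{A\B}(j) = a_r  (j in A\B) *)
Definition mapsAB d B (j r : 'I_N) : Prop :=
  r \notin B /\ forall i, i \notin B -> d i j = (i == r)%:R.

Definition elemB d B : Prop :=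
  (forall j, j \in B -> (forall i, i \in B -> d i j = 0) \/ exists r, mapsB d B j r)
  /\ (forall j j' r, j \in B -> j' \in B -> mapsB d B j r -> mapsB d B j' r -> j = j').
Definition elemAB d B : Prop :=
  (forall j, j \notin B -> (forall i, i \notin B -> d i j = 0) \/ exists r, mapsAB d B j r)
  /\ (forall j j' r, j \notin B -> j' \notin B ->
        mapsAB d B j r -> mapsAB d B j' r -> j = j').

Definition inQ d B (b : 'I_N) : Prop := b \in B /\ exists i, i \in B /\ d i b != 0.
Definition inR d B (b : 'I_N) : Prop := exists q, inQ d B q /\ mapsB d B q b.
Definition inP d B (b : 'I_N) : Prop := [/\ b \in B, ~ inQ d B b & ~ inR d B b].
Definition inY d B (a : 'I_N) : Prop := a \notin B /\ exists i, i \notin B /\ d i a != 0.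
Definition inZ d B (a : 'I_N) : Prop := exists y, inY d B y /\ mapsAB d B y a.
Definition inX d B (a : 'I_N) : Prop := [/\ a \notin B, ~ inY d B a & ~ inZ d B a].

Definition quasi_elementary d B : Prop :=
  [/\ elemB d B, elemAB d B,
      (forall x, inX d B x ->
         forall p p', inP d B p -> inP d B p' -> d p x != 0 -> d p' x != 0 -> p = p'),
      (forall x p, inX d B x -> inP d B p -> d p x != 0 -> d p x = 1)
    & (forall p x x', inP d B p -> inX d B x -> inX d B x' ->
         d p x != 0 -> d p x' != 0 -> x = x')].

Definition inH d B (b : 'I_N) : Prop := inP d B b /\ exists x, inX d B x /\ d b x != 0.
Definition hplus_is d B (b x : 'I_N) : Prop := inX d B x /\ d b x != 0.

End Defs.

From HB Require Import structures.
From mathcomp Require Import all_boot all_order all_algebra.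
Import Order.TTheory GRing.Theory Num.Theory.
Set Implicit Arguments.
Unset Strict Implicit.
Local Open Scope ring_scope.

(* Cases (1) and (2) hold by definition of C-triviality and of h_+.  For (3)
   and (4), let q in B with d_B(q) = r and y outside B with d_{A\B}(y) = z.
   Since d_B is elementary, q is the only element of B whose differential
   involves r, so the coefficient of r in d(d(y)) = 0 is <d y, q> + <d z, r>.
   Hence <d y, q> = -<d z, r>, which is nonzero when (q, y) or (r, z) is a
   C-pair. *)

Section QuasiElementary.
Variables (F : fieldType) (N : nat) (d : 'M[F]_N) (B C : {set 'I_N}).

Lemma Cpair_coef_neq0 c c' :
  (forall k, k \in C -> dtrivial d B k) -> Cpair C c c' -> d c c' != 0.
Proof.
move=> Ctriv [cC succ_c]; have [_ [k' [succ_k _ dkk']]] := Ctriv c cC.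
by have -> : c' = k' by apply: val_inj; rewrite succ_c succ_k.
Qed.

Lemma elemB_row_mapsB q r k :
  elemB d B -> q \in B -> mapsB d B q r -> k \in B -> d r k = (k == q)%:R.
Proof.
move=> [elem inj] qB [rB dq] kB.
have [->|kq] := eqVneq k q; first by rewrite dq // eqxx.
case: (elem k kB) => [-> // | [r' [_ dk]]].
rewrite dk //; case: eqVneq dk => [<- dk | //].
by rewrite (inj k q r kB qB (conj rB dk) (conj rB dq)) eqxx in kq.
Qed.

Lemma sqr0_mapsB_mapsAB q r y z :
  d *m d = 0 -> elemB d B -> q \in B -> mapsB d B q r -> mapsAB d B y z ->
  d q y = - d r z.
Proof.
move=> dd elem qB dq [zB dy]; apply/eqP; rewrite -addr_eq0; apply/eqP.
have := congr1 (fun M : 'M[F]_N => M r y) dd.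
rewrite !mxE (bigID (mem B)) /= => <-; congr (_ + _).
  rewrite (bigD1 q) //= big1 => [|k /andP[kB kq]].
    by rewrite (elemB_row_mapsB elem qB dq qB) eqxx mul1r addr0.
  by rewrite (elemB_row_mapsB elem qB dq kB) (negbTE kq) mul0r.
rewrite (bigD1 z) //= big1 => [|k /andP[kB kz]].
  by rewrite dy // eqxx mulr1 addr0.
by rewrite dy // (negbTE kz) mulr0.
Qed.

End QuasiElementary.

Theorem lemma4p2 (F : fieldType) (N : nat) (deg : 'I_N -> int)
    (d : 'M[F]_N) (B C : {set 'I_N}) :
  in_DABC deg d B C -> quasi_elementary d B ->
  forall a b : 'I_N, a \notin B -> b \in B -> (b < a)%N ->
  [\/ Cpair C b a,
      inH d B b /\ hplus_is d B b a,
      [/\ inY d B a, inQ d B b &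
          exists r z, [/\ mapsB d B b r, mapsAB d B a z & Cpair C r z]]
    | [/\ inZ d B a, inR d B b &
          exists q y, [/\ inQ d B q, inY d B y, mapsB d B q b,
                          mapsAB d B y a & Cpair C q y]]] ->
  d b a != 0.
Proof.
move=> [[[_ dd _] _] _ Ctriv] [elem _ _ _ _] a b _ bB _.
case=> [Cba | [_ [_ dba]] | [_ _ [r [z [db da Crz]]]]
       | [_ _ [q [y [[qB _] _ dq dy Cqy]]]]] //.
- exact: Cpair_coef_neq0 Ctriv Cba.
- by rewrite (sqr0_mapsB_mapsAB dd elem bB db da) oppr_eq0 (Cpair_coef_neq0 Ctriv).
- have := Cpair_coef_neq0 Ctriv Cqy.
  by rewrite (sqr0_mapsB_mapsAB dd elem qB dq dy) oppr_eq0.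
Qed.
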